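(* Let $R$ be a ring and $I$ a nil ideal of $R$. (i) $R$ is GWNC if, and only if, $R/I$ is GWNC. (ii) $R$ is GWNC if, and only if, $J(R)$ is nil and $R/J(R)$ is GWNC.
   Context: All rings are associative with identity; $J(R)$ is the Jacobson radical. For a ring $S$, $U(S)$, ${\rm Nil}(S)$, ${\rm Id}(S)$ denote units, nilpotents, idempotents. $S$ is GWNC if every $a\in S\setminus U(S)$ can be written as $a=q+e$ or $a=q-e$ with $q\in{\rm Nil}(S)$, $e\in{\rm Id}(S)$. *)

From HB Require Import structures.
From mathcomp Require Import all_boot all_algebra.
Set Implicit Arguments.
Unset Strict Implicit.
Unset Printing Implicit Defensive.
Import GRing.Theory.
Local Open Scope ring_scope.

Definition is_unit (R : pzRingType) (x : R) : Prop :=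
  exists y : R, x * y = 1 /\ y * x = 1.

Definition is_nilpotent (R : pzRingType) (x : R) : Prop :=
  exists n : nat, x ^+ n = 0.

Definition is_idempotent (R : pzRingType) (x : R) : Prop := x * x = x.

Definition GWNC (R : pzRingType) : Prop :=
  forall a : R, ~ is_unit a ->
    exists q e : R, is_nilpotent q /\ is_idempotent e /\ (a = q + e \/ a = q - e).

Definition is_ideal (R : pzRingType) (I : R -> Prop) : Prop :=
  [/\ I 0, (forall x y, I x -> I y -> I (x - y)),
      (forall r x, I x -> I (r * x)) & (forall r x, I x -> I (x * r))].

Definition is_left_ideal (R : pzRingType) (L : R -> Prop) : Prop :=
  [/\ L 0, (forall x y, L x -> L y -> L (x - y)) & (forall r x, L x -> L (r * x))].

Definition is_maximal_left_ideal (R : pzRingType) (L : R -> Prop) : Prop :=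
  [/\ is_left_ideal L, ~ L 1 &
      forall L' : R -> Prop, is_left_ideal L' -> (forall x, L x -> L' x) ->
        (forall x, L' x -> L x) \/ (forall x, L' x)].

Definition jacobson (R : pzRingType) : R -> Prop :=
  fun x => forall L : R -> Prop, is_maximal_left_ideal L -> L x.

Definition is_nil (R : pzRingType) (I : R -> Prop) : Prop :=
  forall x, I x -> is_nilpotent x.

(* f : R -> S presents S as the quotient ring R/I: f is a surjective ring
   morphism whose kernel is exactly I. *)
Definition is_quotient_map (R S : pzRingType) (I : R -> Prop)
  (f : {rmorphism R -> S}) : Prop :=
  (forall s : S, exists r : R, f r = s) /\ (forall x : R, f x = 0 <-> I x).

(* Units, nilpotents and idempotents all lift modulo a nil ideal I.  If f a is
   invertible with inverse f b, then a b and b a lie in 1 + I and are units, so a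
   is one.  An idempotent of R/I lifts through the iteration h |-> 3h^2 - 2h^3,
   which squares the defect h^2 - h up to a factor and stays congruent to h
   modulo it, so a nilpotent defect dies after finitely many steps.  Hence a
   decomposition f a = q' +- e' lifts to a = q +- e, while GWNC always passes to
   quotients; this is (i).
   For (ii), let j lie in J(R) of a GWNC ring.  A unit j would make
   1 - j^-1 j = 0 a unit, forcing R = 0.  Otherwise j = q +- e; for j = q + e we
   get e = e j (1 + q)^-1, so e vanishes because 1 - j (1 + q)^-1 is a unit.
   Thus J(R) is nil, and (ii) reduces to (i) for I = J(R). *)

From HB Require Import structures.
From mathcomp Require Import all_boot all_algebra.
From mathcomp Require Import ring generic_quotient ring_quotient boolp.
From mathcomp Require classical_sets.
Set Implicit Arguments.
Unset Strict Implicit.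
Unset Printing Implicit Defensive.
Import GRing.Theory.
Local Open Scope ring_scope.
Local Open Scope quotient_scope.

Section Units.
Variable R : pzRingType.
Implicit Types a b q : R.

Lemma nilpotentN q : is_nilpotent q -> is_nilpotent (- q).
Proof. by case=> n qn; exists n; rewrite exprNn qn mulr0. Qed.

Lemma nilpotent_unit1B q : is_nilpotent q -> is_unit (1 - q).
Proof.
case=> n qn; exists (\sum_(i < n) q ^+ i).
have q_comm : GRing.comm q (\sum_(i < n) q ^+ i).
  by apply: commr_sum => i _; exact: commrX.
have geom : (1 - q) * (\sum_(i < n) q ^+ i) = 1.
  by rewrite -opprB mulNr -subrX1 qn sub0r opprK.
by split=> //; rewrite mulrBr mulr1 -q_comm -[X in X - _]mul1r -mulrBl.
Qed.

Lemma nilpotent_unit1D q : is_nilpotent q -> is_unit (1 + q).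
Proof. by move/nilpotentN/nilpotent_unit1B; rewrite opprK. Qed.

Lemma unit_of_mul_units a b : is_unit (a * b) -> is_unit (b * a) -> is_unit a.
Proof.
case=> [u [abu uab]] [v [bav vba]]; exists (b * u).
have vb_bu : v * b = b * u by rewrite -[v * b]mulr1 -abu !mulrA -(mulrA v) vba mul1r.
by split; [rewrite mulrA abu | rewrite -vb_bu -mulrA vba].
Qed.

Lemma unit1B_mulC a b : is_unit (1 - a * b) -> is_unit (1 - b * a).
Proof.
case=> c [abc cab]; exists (1 + b * c * a); split.
  have E : b * ((1 - a * b) * c) * a = b * a by rewrite abc mulr1.
  rewrite mulrBl mul1r mulrBr !mulrBl !mulrA in E.
  by rewrite mulrDr mulr1 mulrBl mul1r !mulrA E subrK.
have E : b * (c * (1 - a * b)) * a = b * a by rewrite cab mulr1.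
rewrite mulrBr mulr1 mulrBr !mulrBl !mulrA in E.
by rewrite mulrDl mul1r mulrBr mulr1 !mulrA -E subrK.
Qed.

End Units.

(* h |-> 3h^2 - 2h^3 sends the defect d = h^2 - h to d^2 (4d - 3).  The iterates
   live in {poly int} and are evaluated at x only afterwards, so that these
   identities are proved in a commutative ring. *)
Definition idem_iter (k : nat) : {poly int} :=
  iter k (fun h => 3%:R * h ^+ 2 - 2%:R * h ^+ 3) 'X.

Local Notation defect p := (p ^+ 2 - p).

Lemma idem_iter_spec k :
  (exists u, defect (idem_iter k) = defect 'X ^+ (2 ^ k) * u) /\
  (exists v, idem_iter k - 'X = defect 'X * v).
Proof.
elim: k => [|k [[u hu] [v hv]]].
  by split; [exists 1; rewrite mulr1 | exists 0; rewrite subrr mulr0].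
rewrite [idem_iter k.+1]/=; set h := idem_iter k.
split.
  exists (u ^+ 2 * (4%:R * h ^+ 2 - 4%:R * h - 3%:R)).
  have -> : defect (3%:R * h ^+ 2 - 2%:R * h ^+ 3) =
            defect h ^+ 2 * (4%:R * h ^+ 2 - 4%:R * h - 3%:R) by ring.
  by rewrite hu expnS mul2n -addnn exprD; ring.
have [m m_eq] : exists m, (2 ^ k = m.+1)%N.
  by exists (2 ^ k).-1; rewrite prednK ?expn_gt0.
exists (v - defect 'X ^+ m * u * (2%:R * h - 1)).
have -> : 3%:R * h ^+ 2 - 2%:R * h ^+ 3 - 'X = - defect h * (2%:R * h - 1) + (h - 'X).
  by ring.
by rewrite hu hv m_eq exprS; ring.
Qed.

Lemma idempotent_lift_defect_nz (R : nzRingType) (x : R) :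
  is_nilpotent (defect x) -> exists e w : R, is_idempotent e /\ e - x = defect x * w.
Proof.
case=> n xn.
pose ev : {rmorphism {poly int} -> R} := horner_morph (commr_int x).
have evX : ev 'X = x by exact: horner_morphX.
have [[u hu] [v hv]] := idem_iter_spec n.
exists (ev (idem_iter n)), (ev v); split.
  apply/eqP; rewrite -subr_eq0 -rmorphM -expr2 -rmorphB hu rmorphM rmorphXn rmorphB rmorphXn evX.
  by rewrite -(subnKC (ltnW (ltn_expl n (ltnSn 1)))) exprD xn !mul0r.
by rewrite -evX -rmorphB hv rmorphM rmorphB rmorphXn.
Qed.

(* Polynomial evaluation needs a nontrivial ring. *)
Definition nz_ring (R : pzRingType) of (1 : R) != 0 : Type := R.
HB.instance Definition _ (R : pzRingType) (R_nz : (1 : R) != 0) :=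
  GRing.PzRing.on (nz_ring R_nz).
HB.instance Definition _ (R : pzRingType) (R_nz : (1 : R) != 0) :=
  GRing.PzSemiRing_isNonZero.Build (nz_ring R_nz) R_nz.

Lemma idempotent_lift_defect (R : pzRingType) (x : R) :
  is_nilpotent (defect x) -> exists e w : R, is_idempotent e /\ e - x = defect x * w.
Proof.
have [R0 _ | R_nz] := eqVneq (1 : R) 0; last exact: (@idempotent_lift_defect_nz (nz_ring R_nz)).
have all0 (y : R) : y = 0 by rewrite -[y]mulr1 R0 mulr0.
by exists 0, 0; rewrite /is_idempotent mulr0 (all0 (0 - x)) (all0 (defect x * 0)).
Qed.

Section SurjectiveImage.
Variables (R S : pzRingType) (f : {rmorphism R -> S}).

Lemma rmorph_unit a : is_unit a -> is_unit (f a).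
Proof. by case=> b [ab ba]; exists (f b); rewrite -!rmorphM ab ba rmorph1. Qed.

Lemma GWNC_surj_image : (forall s, exists r, f r = s) -> GWNC R -> GWNC S.
Proof.
move=> f_surj R_GWNC s; have [a <-] := f_surj s => fa_nonunit.
have [|q [e [[n qn] [ee a_eq]]]] := R_GWNC a; first by move/rmorph_unit.
exists (f q), (f e); split; first by exists n; rewrite -rmorphXn qn rmorph0.
split; first by rewrite /is_idempotent -rmorphM ee.
by case: a_eq => ->; [left; rewrite rmorphD | right; rewrite rmorphB].
Qed.

End SurjectiveImage.

Section NilKernel.
Variables (R S : pzRingType) (f : {rmorphism R -> S}).
Hypothesis f_surj : forall s, exists r, f r = s.
Hypothesis ker_nil : forall x, f x = 0 -> is_nilpotent x.

Lemma nilpotent_lift x : is_nilpotent (f x) -> is_nilpotent x.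
Proof.
case=> n fxn; have [m xnm] : is_nilpotent (x ^+ n) by apply: ker_nil; rewrite rmorphXn.
by exists (n * m)%N; rewrite exprM.
Qed.

Lemma unit_lift a : is_unit (f a) -> is_unit a.
Proof.
case=> b'; have [b <-] := f_surj b' => -[ab ba].
have unit_of_f1 c : f c = 1 -> is_unit c.
  move=> fc; have /nilpotent_unit1D : is_nilpotent (c - 1).
    by apply: ker_nil; rewrite rmorphB rmorph1 fc subrr.
  by rewrite addrCA subrr addr0.
by apply: (@unit_of_mul_units _ a b); apply: unit_of_f1; rewrite rmorphM.
Qed.

Lemma idempotent_lift x : is_idempotent (f x) -> exists2 e, is_idempotent e & f e = f x.
Proof.
move=> fx_idem.
have fdefect : f (x ^+ 2 - x) = 0 by rewrite rmorphB rmorphXn expr2 fx_idem subrr.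
have [e [w [e_idem ex]]] := idempotent_lift_defect (ker_nil fdefect).
by exists e => //; apply/eqP; rewrite -subr_eq0 -rmorphB ex rmorphM fdefect mul0r.
Qed.

Lemma GWNC_lift : GWNC S -> GWNC R.
Proof.
move=> S_GWNC a a_nonunit.
have [q' [e' [q'_nil [e'_idem fa_eq]]]] := S_GWNC (f a) (fun u => a_nonunit (unit_lift u)).
have [x fx] := f_surj e'.
have [|e e_idem fe] := @idempotent_lift x; first by rewrite fx.
rewrite fx in fe; case: fa_eq => fa_eq.
  exists (a - e), e; split; last by split=> //; left; rewrite subrK.
  by apply: nilpotent_lift; rewrite rmorphB fa_eq fe addrK.
exists (a + e), e; split; last by split=> //; right; rewrite addrK.
by apply: nilpotent_lift; rewrite rmorphD fa_eq fe subrK.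
Qed.

End NilKernel.

Lemma GWNC_quotient_nil (R S : pzRingType) (I : R -> Prop) (f : {rmorphism R -> S}) :
  is_quotient_map I f -> is_nil I -> GWNC R <-> GWNC S.
Proof.
move=> [f_surj f_ker] I_nil; have ker_nil x : f x = 0 -> is_nilpotent x by move/f_ker/I_nil.
by split; [exact: GWNC_surj_image | exact: GWNC_lift].
Qed.

(* The proof argument only serves as a key for the canonical [zmodClosed]
   instance below. *)
Definition ideal_mem (R : pzRingType) (I : R -> Prop) of is_ideal I : pred R :=
  fun x => `[< I x >].

Section QuotientRing.
Variables (R : pzRingType) (I : R -> Prop) (I_ideal : is_ideal I).
Local Notation mem_I := (ideal_mem I_ideal).

Fact ideal_mem_zmod_closed : zmod_closed mem_I.
Proof.
have [I0 IB _ _] := I_ideal; split; first exact/asboolP.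
by move=> x y /asboolP Ix /asboolP Iy; apply/asboolP; exact: IB.
Qed.

HB.instance Definition _ := GRing.isZmodClosed.Build R mem_I ideal_mem_zmod_closed.

Definition quot_ring := Quotient.quot (GRing.ZmodClosed.clone R mem_I _).
HB.instance Definition _ := GRing.Zmodule.on quot_ring.

Definition quot_pi (x : R) : quot_ring := \pi x.

Lemma quot_pi_eqP x y : quot_pi x = quot_pi y <-> I (x - y).
Proof.
rewrite /quot_pi; split => [/eqP | Ixy].
  by rewrite -Quotient.idealrBE unfold_in => /asboolP.
by apply/eqP; rewrite -Quotient.idealrBE unfold_in; apply/asboolP.
Qed.

Lemma quot_piK (a : quot_ring) : quot_pi (repr a) = a.
Proof. exact: reprK. Qed.

Lemma quot_piD x y : quot_pi (x + y) = quot_pi x + quot_pi y.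
Proof. exact: Quotient.pi_add. Qed.

Lemma quot_piN x : quot_pi (- x) = - quot_pi x.
Proof. exact: Quotient.pi_opp. Qed.

Definition quot_mul (a b : quot_ring) : quot_ring := quot_pi (repr a * repr b).

Lemma quot_piM x y : quot_pi (x * y) = quot_mul (quot_pi x) (quot_pi y).
Proof.
have [_ IB IMl IMr] := I_ideal.
rewrite /quot_mul; apply/quot_pi_eqP.
set x' := repr _; set y' := repr _.
have Ix : I (x - x') by apply/quot_pi_eqP; rewrite quot_piK.
have Iy : I (y - y') by apply/quot_pi_eqP; rewrite quot_piK.
have -> : x * y - x' * y' = x * (y - y') - (- (x - x') * y').
  by rewrite mulNr opprK mulrBr mulrBl addrA subrK.
by apply: IB; [exact: IMl | rewrite mulNr -mulN1r; apply: IMl; exact: IMr].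
Qed.

Let quot_one : quot_ring := quot_pi 1.

Lemma quot_mulA : associative quot_mul.
Proof. by move=> a b c; rewrite -(quot_piK a) -(quot_piK b) -(quot_piK c) -!quot_piM mulrA. Qed.

Lemma quot_mul1q : left_id quot_one quot_mul.
Proof. by move=> a; rewrite -(quot_piK a) -quot_piM mul1r. Qed.

Lemma quot_mulq1 : right_id quot_one quot_mul.
Proof. by move=> a; rewrite -(quot_piK a) -quot_piM mulr1. Qed.

Lemma quot_mulDl : left_distributive quot_mul +%R.
Proof.
move=> a b c; rewrite -(quot_piK a) -(quot_piK b) -(quot_piK c).
by rewrite -quot_piD -!quot_piM -quot_piD mulrDl.
Qed.

Lemma quot_mulDr : right_distributive quot_mul +%R.
Proof.
move=> a b c; rewrite -(quot_piK a) -(quot_piK b) -(quot_piK c).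
by rewrite -quot_piD -!quot_piM -quot_piD mulrDr.
Qed.

HB.instance Definition _ := GRing.Zmodule_isPzRing.Build quot_ring
  quot_mulA quot_mul1q quot_mulq1 quot_mulDl quot_mulDr.

Fact quot_pi_zmod_morphism : zmod_morphism quot_pi.
Proof. by move=> x y; rewrite quot_piD quot_piN. Qed.

Fact quot_pi_monoid_morphism : monoid_morphism quot_pi.
Proof. by split=> // x y; rewrite quot_piM. Qed.

HB.instance Definition _ :=
  GRing.isZmodMorphism.Build R quot_ring quot_pi quot_pi_zmod_morphism.
HB.instance Definition _ :=
  GRing.isMonoidMorphism.Build R quot_ring quot_pi quot_pi_monoid_morphism.

Lemma quot_pi_quotient_map : is_quotient_map I (quot_pi : {rmorphism R -> quot_ring}).
Proof.
split=> [a | x]; first by exists (repr a); exact: quot_piK.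
by rewrite -(rmorph0 quot_pi) quot_pi_eqP subr0.
Qed.

End QuotientRing.

Section Jacobson.
Variable R : pzRingType.
Implicit Types j q e : R.

Definition proper_left_ideal (L : R -> Prop) := is_left_ideal L /\ ~ L 1.

Lemma proper_left_ideal_chain_union (T : Type) (A : T -> Prop) (L : T -> R -> Prop) :
  (exists i, A i) -> (forall i, A i -> proper_left_ideal (L i)) ->
  (forall i k, A i -> A k -> (forall x, L i x -> L k x) \/ (forall x, L k x -> L i x)) ->
  proper_left_ideal (fun x => exists2 i, A i & L i x).
Proof.
move=> [i0 Ai0] L_proper L_chain; split; last first.
  by case=> i /L_proper [_ Li1].
split.
- by exists i0 => //; have [[]] := L_proper i0 Ai0.
- move=> x y [i Ai Lix] [k Ak Lky].
  have [[_ LiB _] _] := L_proper i Ai; have [[_ LkB _] _] := L_proper k Ak.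
  case: (L_chain i k Ai Ak) => [ik | ki].
    by exists k => //; apply: LkB => //; exact: ik.
  by exists i => //; apply: LiB => //; exact: ki.
- move=> r x [i Ai Lix]; exists i => //.
  by have [[_ _ LiM] _] := L_proper i Ai; exact: LiM.
Qed.

Lemma exists_maximal_left_ideal (L0 : R -> Prop) :
  proper_left_ideal L0 -> exists2 M, is_maximal_left_ideal M & forall x, L0 x -> M x.
Proof.
move=> L0_proper.
pose T := {L : R -> Prop | proper_left_ideal L /\ forall x, L0 x -> L x}.
pose t0 : T := exist _ L0 (conj L0_proper (fun x L0x => L0x)).
pose le (L L' : T) := `[< forall x, sval L x -> sval L' x >].
have [|||[M [[M_ideal M1] L0M]] M_max] := @classical_sets.ZL_preorder T t0 le.
- by move=> L; apply/asboolP.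
- by move=> ? ? ? /asboolP sub1 /asboolP sub2; apply/asboolP => x /sub1 /sub2.
- move=> A A_chain; have [[L AL] | A0] := EM (exists L, A L); last first.
    by exists t0 => L AL; case: A0; exists L.
  have U_proper : proper_left_ideal (fun x => exists2 L', A L' & sval L' x).
    apply: proper_left_ideal_chain_union; first by exists L.
      by move=> L' _; case: (svalP L').
    by move=> L1 L2 AL1 AL2; case: (A_chain _ _ AL1 AL2) => /asboolP; [left | right].
  have L0U x : L0 x -> exists2 L', A L' & sval L' x.
    by move=> L0x; exists L => //; exact: (svalP L).2.
  exists (exist _ (fun x => exists2 L', A L' & sval L' x) (conj U_proper L0U)).
  by move=> L' AL'; apply/asboolP => x; exists L'.
exists M => //; split=> // L' L'_ideal ML'.
have [L'1 | L'1] := EM (L' 1).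
  by right=> x; rewrite -[x]mulr1; case: L'_ideal => _ _; apply.
left; have L'_in : proper_left_ideal L' /\ forall x, L0 x -> L' x.
  by split=> // x /L0M /ML'.
by apply/asboolP; apply: (M_max (exist _ L' L'_in)); apply/asboolP.
Qed.

Lemma jacobson_left_inv j : jacobson j -> forall r, exists c, c * (1 - r * j) = 1.
Proof.
move=> Jj r; apply: contrapT => no_inv.
pose L0 y := exists s, y = s * (1 - r * j).
have [|M M_max L0M] := @exists_maximal_left_ideal L0.
  split; last by case=> s s_inv; apply: no_inv; exists s.
  split; first by exists 0; rewrite mul0r.
    by move=> _ _ [s ->] [s' ->]; exists (s - s'); rewrite mulrBl.
  by move=> r' _ [s ->]; exists (r' * s); rewrite mulrA.
have Mj := Jj M M_max; case: M_max => [[_ MB MM] M1 _]; apply: M1.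
have M1rj : M (1 - r * j) by apply: L0M; exists 1; rewrite mul1r.
by have := MB _ _ M1rj (MM (- r) _ Mj); rewrite mulNr opprK subrK.
Qed.

Lemma unit1B_of_left_inv j :
  (forall r, exists c, c * (1 - r * j) = 1) -> forall r, is_unit (1 - r * j).
Proof.
move=> left_inv r; have [c c_inv] := left_inv r; exists c; split=> //.
have [d d_inv] := left_inv (- (c * r)).
have c_eq : 1 - (- (c * r)) * j = c.
  by rewrite mulNr opprK -{1}c_inv mulrBr mulr1 mulrA subrK.
rewrite c_eq in d_inv.
have d_eq : d = 1 - r * j by rewrite -[d]mulr1 -{1}c_inv mulrA d_inv mul1r.
by rewrite -d_eq.
Qed.

Lemma jacobsonP j : jacobson j <-> forall r, is_unit (1 - r * j).
Proof.
split=> [Jj | units L [[L0 LB LM] L1 L_max]].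
  exact/unit1B_of_left_inv/jacobson_left_inv.
apply: contrapT => Lj.
pose L' y := exists l s, L l /\ y = l + s * j.
have [||LL' | L'_all] := L_max L'.
- split; first by exists 0, 0; rewrite mul0r addr0.
    move=> _ _ [l [s [Ll ->]]] [l' [s' [Ll' ->]]].
    by exists (l - l'), (s - s'); split; [apply: LB | rewrite mulrBl opprD addrACA].
  move=> r _ [l [s [Ll ->]]]; exists (r * l), (r * s); split; first exact: LM.
  by rewrite mulrDr mulrA.
- by move=> x Lx; exists x, 0; rewrite mul0r addr0.
- by apply: Lj; apply: LL'; exists 0, 1; rewrite mul1r add0r.
have [l [s [Ll l_eq]]] := L'_all 1.
have [u [_ u_inv]] := units s.
by apply: L1; rewrite -u_inv; apply: LM; rewrite l_eq addrK.
Qed.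

Lemma jacobson_ideal : is_ideal (@jacobson R).
Proof.
split.
- by move=> L [[L0 _ _] _ _].
- move=> x y Jx Jy L L_max; have [[_ LB _] _ _] := L_max.
  by apply: LB; [exact: Jx | exact: Jy].
- by move=> r x Jx L L_max; have [[_ _ LM] _ _] := L_max; apply: LM; exact: Jx.
move=> r x /jacobsonP Jx; apply/jacobsonP => s.
by rewrite mulrA; apply: unit1B_mulC; rewrite mulrA; exact: Jx.
Qed.

Lemma jacobson_idempotent_eq0 j q e :
  jacobson j -> is_nilpotent q -> is_idempotent e -> j = q + e -> e = 0.
Proof.
move=> /jacobsonP Jj /nilpotent_unit1D [u [qu _]] ee j_eq.
have ej : e * j = e * (1 + q) by rewrite j_eq !mulrDr ee mulr1 addrC.
have e_eq : e = e * j * u by rewrite ej -mulrA qu mulr1.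
have [c [c_inv _]] := unit1B_mulC (Jj u).
by rewrite -[e]mulr1 -c_inv mulrA mulrBr mulr1 mulrA -e_eq subrr mul0r.
Qed.

Lemma GWNC_jacobson_nil : GWNC R -> is_nil (@jacobson R).
Proof.
move=> R_GWNC j Jj; have [[y [_ yj]] | j_nonunit] := EM (is_unit j).
  have [c [_ c_inv]] := (jacobsonP j).1 Jj y.
  by exists 1%N; rewrite expr1 -[j]mulr1 -c_inv yj subrr !mulr0.
have [J0 JB _ _] := jacobson_ideal.
have [q [e [q_nil [ee [j_eq | j_eq]]]]] := R_GWNC j j_nonunit.
  by rewrite j_eq (jacobson_idempotent_eq0 Jj q_nil ee j_eq) addr0.
have Jj' : jacobson (- j) by rewrite -sub0r; exact: JB J0 Jj.
have j'_eq : - j = - q + e by rewrite j_eq opprB addrC.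
by rewrite j_eq (jacobson_idempotent_eq0 Jj' (nilpotentN q_nil) ee j'_eq) subr0.
Qed.

End Jacobson.

Theorem proposition2p8 :
  (forall (R : pzRingType) (I : R -> Prop), is_ideal I -> is_nil I ->
     forall (S : pzRingType) (f : {rmorphism R -> S}), is_quotient_map I f ->
       (GWNC R <-> GWNC S))
  /\
  (forall R : pzRingType,
     GWNC R <->
     (is_nil (@jacobson R) /\
      forall (S : pzRingType) (f : {rmorphism R -> S}),
        is_quotient_map (@jacobson R) f -> GWNC S)).
Proof.
split=> [R I _ I_nil S f f_quot | R]; first exact: GWNC_quotient_nil f_quot I_nil.
split=> [R_GWNC | [J_nil GWNC_R_J]].
  split=> [|S f [f_surj _]]; first exact: GWNC_jacobson_nil.
  exact: GWNC_surj_image f_surj R_GWNC.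
have J_quot := quot_pi_quotient_map (jacobson_ideal R).
apply/(GWNC_quotient_nil J_quot J_nil).
exact: GWNC_R_J J_quot.
Qed.
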